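(* Let $I\subset\mathbb{B}[x^{\pm1}]$ be the zero-dimensional tropical ideal of degree $2$ corresponding to the sublattice $4\mathbb{Z}\subset\mathbb{Z}$, i.e. the tropical ideal whose polynomials of minimal support are the binomials $x^u\oplus x^v$ with $u\neq v$, $u-v\in4\mathbb{Z}$, and the trinomials $x^u\oplus x^v\oplus x^w$ with $u,v,w$ pairwise incongruent modulo $4$. Then there is no field $K$ of characteristic $2$ and ideal $J\subset K[x^{\pm1}]$ with $I=\operatorname{trop}(J)$.
   Context: $\mathbb{B}=\{\infty,0\}$ with $\oplus=\min$ and multiplication $+$. For a field $K$ and $F\in K[x_1^{\pm1},\dots,x_n^{\pm1}]$, $\operatorname{trop}(F)=\bigoplus_{\mathbf u\in\operatorname{supp}(F)}\mathbf x^{\mathbf u}\in\mathbb{B}[x_1^{\pm1},\dots,x_n^{\pm1}]$, and for an ideal $J$, $\operatorname{trop}(J)$ is the ideal generated by $\{\operatorname{trop}(F):F\in J\}$. A tropical ideal of the form $\operatorname{trop}(J)$ is realizable over $K$. Polynomials of minimal support are those whose support is minimal (under inclusion) among supports of nonzero-support polynomials in the ideal. *)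

From HB Require Import structures.
From mathcomp Require Import all_boot all_order all_algebra.
From mathcomp Require Import finmap.
Set Implicit Arguments. Unset Strict Implicit. Unset Printing Implicit Defensive.
Import Order.TTheory GRing.Theory Num.Theory.
Local Open Scope fset_scope.
Local Open Scope ring_scope.

(* Since B = {oo, 0}, a polynomial  (+)_{u in A} x^u  is determined by *)
(* its support A, a finite subset of Z.  We identify it with A:        *)
(*   tropical sum (+) = min   <->  union of supports,                  *)
(*   tropical product         <->  Minkowski sum of supports,          *)
(*   the zero polynomial oo   <->  the empty set.                      *)
Definition Bpoly := {fset int}.

Definition Bmul (G A : Bpoly) : Bpoly := [fset (g + a)%R | g in G, a in A].

Definition Bideal (I : Bpoly -> Prop) : Prop :=
  [/\ I fset0,
      (forall A B, I A -> I B -> I (A `|` B)) &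
      (forall G A, I A -> I (Bmul G A))].

(* tropical ideal: an ideal satisfying the monomial elimination axiom:
   for f, g in I and u with f_u = g_u = 0, there is h in I with h_u = oo
   and h_v >= min(f_v, g_v) for all v, with equality when f_v <> g_v. *)
Definition tropical_ideal (I : Bpoly -> Prop) : Prop :=
  Bideal I /\
  forall A B (u : int), I A -> I B -> u \in A -> u \in B ->
    exists H, [/\ I H, u \notin H,
                  (forall v, v \in H -> (v \in A) || (v \in B)) &
                  (forall v, v != u -> (v \in A) != (v \in B) -> v \in H)].

Definition minimal_support (I : Bpoly -> Prop) (A : Bpoly) : Prop :=
  [/\ I A, A != fset0 &
      forall B, I B -> B != fset0 -> B `<=` A -> B = A].

Definition circuit4 (A : Bpoly) : Prop :=
  (exists u v : int, u != v /\ (4 %| u - v)%Z /\ A = [fset u; v]) \/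
  (exists u v w : int,
     [/\ ~~ (4 %| u - v)%Z, ~~ (4 %| u - w)%Z, ~~ (4 %| v - w)%Z &
         A = [fset u; v; w]]).

(* Laurent polynomials over a field K: finitely supported maps Z -> K. *)
Definition laurent (K : fieldType) (f : int -> K) : Prop :=
  exists s : seq int, forall u, f u != 0 -> u \in s.

(* an ideal J of K[x^{+-1}]: a set of Laurent polynomials containing 0,
   closed under addition, and closed under multiplication by any Laurent
   polynomial g (the product is computed over a duplicate-free list s
   containing the support of g). *)
Definition Lideal (K : fieldType) (J : (int -> K) -> Prop) : Prop :=
  [/\ (forall f, J f -> laurent f),
      J (fun _ => 0),
      (forall f h, J f -> J h -> J (fun w => f w + h w)) &
      (forall f (g : int -> K) (s : seq int), J f -> uniq s ->
         (forall u, g u != 0 -> u \in s) ->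
         J (fun w => \sum_(u <- s) g u * f (w - u)))].

(* A is the support of F, i.e. A = trop(F) *)
Definition supp_is (K : fieldType) (F : int -> K) (A : Bpoly) : Prop :=
  forall u, (u \in A) = (F u != 0).

(* trop(J): the ideal of B[x^{+-1}] generated by {trop(F) : F in J},
   i.e. the intersection of all ideals containing these. *)
Definition tropJ (K : fieldType) (J : (int -> K) -> Prop) (A : Bpoly) : Prop :=
  forall I' : Bpoly -> Prop, Bideal I' ->
    (forall F A', J F -> supp_is F A' -> I' A') -> I' A.

From HB Require Import structures.
From mathcomp Require Import all_boot all_order all_algebra.
From mathcomp Require Import finmap.
From mathcomp Require Import zify ring.
From Stdlib Require Import Classical FunctionalExtensionality.
Import GRing.Theory.
Set Implicit Arguments. Unset Strict Implicit.
Local Open Scope fset_scope.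
Local Open Scope ring_scope.

(* Suppose I = trop(J) for an ideal J of K[x^{+-1}] with char K = 2, and
   that the minimal supports of I are the circuits of 4Z (circuit4).
     Dividing H by F leaves a remainder in J supported in {0,1}; its
     x-coefficient is H_4 (2ab - a^3) with a = F_1/F_2, b = F_0/F_2, which
     is nonzero in characteristic 2 (section Reduction).
   The support of this remainder is a nonempty member of I inside {0,1},
   so it contains a minimal support of I (minimal_support_below), i.e. a
   circuit of 4Z inside {0,1}; but there is none (no_circuit4_in_01). *)

Lemma mem_translate (t u : int) (A : Bpoly) :
  (u \in Bmul [fset t] A) = (u - t \in A).
Proof.
apply/imfset2P/idP => [[g] | uA].
  by rewrite inE => /eqP -> [a aA ->]; rewrite addrC addKr.
by exists t; rewrite ?inE //; exists (u - t); rewrite // addrC subrK.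
Qed.

Lemma tropJ_supp (K : fieldType) (J : (int -> K) -> Prop) F A :
  J F -> supp_is F A -> tropJ J A.
Proof. by move=> JF sF I' _ gen; exact: gen JF sF. Qed.

Definition covered_by_translates (K : fieldType) (J : (int -> K) -> Prop)
    (A : Bpoly) : Prop :=
  forall x, x \in A -> exists F A' t,
    [/\ J F, supp_is F A', x - t \in A' & forall a, a \in A' -> a + t \in A].

(* Being covered by translates holds for the generators of trop(J) and is
   preserved by union and by multiplication, so it holds on all of trop(J). *)
Lemma tropJ_covered (K : fieldType) (J : (int -> K) -> Prop) A :
  tropJ J A -> covered_by_translates J A.
Proof.
apply; last first.
  move=> F A' JF sF x xA; exists F, A', 0.
  by split; rewrite ?subr0 // => a; rewrite addr0.
split=> [x | A1 B1 covA covB x | G A1 covA x].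
- by rewrite inE.
- rewrite inE => /orP [/covA | /covB] [F [A' [t [JF sF xt sub]]]];
    by exists F, A', t; split=> // a /sub; rewrite inE => ->; rewrite ?orbT.
- case/imfset2P => g gG [a aA ->].
  have [F [A' [t [JF sF at' sub]]]] := covA a aA.
  exists F, A', (t + g); split=> //.
    by rewrite [g + a]addrC opprD addrACA subrr addr0.
  move=> b /sub bt; apply/imfset2P; exists g => //; exists (b + t) => //.
  by rewrite addrA addrC.
Qed.

Lemma Lideal_monomial (K : fieldType) (J : (int -> K) -> Prop) F (c : K) t :
  Lideal J -> J F -> J (fun w => c * F (w - t)).
Proof.
case=> _ _ _ mulJ JF; pose g v := if v == t then c else 0.
have gt u : g u != 0 -> u \in [:: t].
  by rewrite /g mem_seq1; case: ifP; rewrite ?eqxx.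
suff -> : (fun w => c * F (w - t))
           = fun w => \sum_(u <- [:: t]) g u * F (w - u).
  exact: mulJ.
by apply: functional_extensionality => w; rewrite big_seq1 /g eqxx.
Qed.

Lemma Lideal_translate (K : fieldType) (J : (int -> K) -> Prop) F t :
  Lideal J -> J F -> J (fun w => F (w - t)).
Proof.
move=> LJ /(Lideal_monomial 1 t LJ).
suff -> : (fun w => 1 * F (w - t)) = fun w => F (w - t) by [].
by apply: functional_extensionality => w; rewrite mul1r.
Qed.

Lemma Lideal_add_monomial (K : fieldType) (J : (int -> K) -> Prop) G F c t :
  Lideal J -> J G -> J F -> J (fun w => G w + c * F (w - t)).
Proof.
move=> LJ JG JF; case: (LJ) => _ _ addJ _.
exact: addJ _ _ JG (Lideal_monomial c t LJ JF).
Qed.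

Lemma supp_translate (K : fieldType) (F : int -> K) A t :
  supp_is F A -> supp_is (fun w => F (w - t)) (Bmul [fset t] A).
Proof. by move=> sF u; rewrite mem_translate sF. Qed.

Lemma Lideal_supp (K : fieldType) (J : (int -> K) -> Prop) F :
  Lideal J -> J F -> exists A : Bpoly, supp_is F A.
Proof.
case=> laurentJ _ _ _ /laurentJ [s suppF].
exists [fset u in s | F u != 0] => u; rewrite !inE.
by apply/andP/idP => [[] | Fu] //; split=> //; exact: suppF.
Qed.

Lemma minimal_support_realized (K : fieldType) (J : (int -> K) -> Prop)
    (I : Bpoly -> Prop) A :
  Lideal J -> (forall A, I A <-> tropJ J A) -> minimal_support I A ->
  exists F, J F /\ supp_is F A.
Proof.
move=> LJ IJ [IA A0 minA]; have [x xA] := fset0Pn _ A0.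
have [F [A' [t [JF sF xt sub]]]] := tropJ_covered (proj1 (IJ A) IA) xA.
pose T := Bmul [fset t] A'.
have JFt := Lideal_translate t LJ JF.
have sFt : supp_is (fun w => F (w - t)) T := supp_translate t sF.
have IT : I T by apply/IJ; exact: tropJ_supp JFt sFt.
have T0 : T != fset0 by apply/fset0Pn; exists x; rewrite mem_translate.
have TA : T `<=` A.
  by apply/fsubsetP => u; rewrite mem_translate => /sub; rewrite subrK.
by exists (fun w => F (w - t)); rewrite -(minA T IT T0 TA).
Qed.

Lemma minimal_support_below (I : Bpoly -> Prop) (A : Bpoly) :
  I A -> A != fset0 -> exists B, minimal_support I B /\ B `<=` A.
Proof.
move: (leqnn #|`A|); move: {2}#|`A| => n; elim: n A => [|n IH] A.
  by rewrite leqn0 cardfs_eq0 => /eqP ->; rewrite eqxx.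
move=> An IA A0; case: (classic (minimal_support I A)) => [mA | nmA].
  by exists A; split; rewrite ?fsubset_refl.
have [B IB [B0 BA BnA]] : exists2 B, I B & [/\ B != fset0, B `<=` A & B <> A].
  apply: NNPP => noB; apply: nmA; split=> // B IB B0 BA.
  by apply: NNPP => BnA; apply: noB; exists B.
have BltA : (#|`B| < #|`A|)%N.
  by apply: fproper_ltn_card; rewrite fproperEneq BA andbT; apply/eqP.
have [C [mC CB]] := IH B (leq_trans BltA An) IB B0.
by exists C; split; last exact: fsubset_trans BA.
Qed.

Lemma no_circuit4_in_01 (B : Bpoly) :
  B `<=` [fset (0 : int); 1] -> ~ circuit4 B.
Proof.
move=> /fsubsetP sub; have in01 x : x \in B -> x = 0 \/ x = 1.
  by move/sub; rewrite !inE => /orP[] /eqP; [left | right].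
case=> [[u [v [uv [d4 eB]]]] | [u [v [w [duv duw dvw eB]]]]].
- move: (in01 u) (in01 v) uv d4; rewrite eB !inE !eqxx ?orbT /=.
  by move=> /(_ isT) [->|->] /(_ isT) [->|->].
- move: (in01 u) (in01 v) (in01 w) duv duw dvw.
  rewrite eB !inE !eqxx ?orbT /=.
  by move=> /(_ isT) [->|->] /(_ isT) [->|->] /(_ isT) [->|->].
Qed.

(* With
   a = F_1/F_2, b = F_0/F_2 and c = H_4/F_2, the quotient of x^4 by the monic
   x^2 + a x + b = F/F_2 is Q = x^2 - a x + (a^2 - b), and the remainder of H
   is reduction = H - c Q F. *)
Section Reduction.

Variables (K : fieldType) (F H : int -> K).
Hypotheses (suppF : supp_is F [fset 0; 1; 2]) (suppH : supp_is H [fset 0; 4]).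

Definition reduction (w : int) : K :=
  let a := F 1 / F 2 in let b := F 0 / F 2 in let c := H 4 / F 2 in
  H w - c * F (w - 2) + c * a * F (w - 1) + c * (b - a ^+ 2) * F w.

Let F_out u : u \notin [fset (0 : int); 1; 2] -> F u = 0.
Proof. by rewrite suppF negbK => /eqP. Qed.

Let H_out u : u \notin [fset (0 : int); 4] -> H u = 0.
Proof. by rewrite suppH negbK => /eqP. Qed.

Let F2 : F 2 != 0. Proof. by rewrite -suppF !inE. Qed.

Lemma reduction_in_ideal (J : (int -> K) -> Prop) :
  Lideal J -> J F -> J H -> J reduction.
Proof.
move=> LJ JF JH.
have := Lideal_add_monomial _ 0 LJ (Lideal_add_monomial _ 1 LJ
          (Lideal_add_monomial (- (H 4 / F 2)) 2 LJ JH JF) JF) JF.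
suff -> : reduction = fun w => H w + - (H 4 / F 2) * F (w - 2)
  + (H 4 / F 2 * (F 1 / F 2)) * F (w - 1)
  + (H 4 / F 2 * (F 0 / F 2 - (F 1 / F 2) ^+ 2)) * F (w - 0) by [].
by apply: functional_extensionality => w; rewrite /reduction subr0 mulNr.
Qed.

Lemma reduction_out (u : int) :
  u \notin [fset (0 : int); 1] -> reduction u = 0.
Proof.
rewrite !inE negb_or => /andP [u0 u1]; rewrite /reduction /=.
have [->|u2] := eqVneq u 2.
  by rewrite subrr (_ : 2 - 1 = 1) // H_out ?inE //; field.
have [->|u3] := eqVneq u 3.
  rewrite (_ : 3 - 2 = 1) // (_ : 3 - 1 = 2) // H_out ?inE //.
  by rewrite (@F_out 3) ?inE //; field.
have [->|u4] := eqVneq u 4.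
  rewrite (_ : 4 - 2 = 2) // (_ : 4 - 1 = 3) //.
  by rewrite (@F_out 3) ?inE // (@F_out 4) ?inE //; field.
rewrite H_out ?(@F_out u) ?(@F_out (u - 1)) ?(@F_out (u - 2)) ?inE //.
  by rewrite !mulr0 subrr !addr0.
all: lia.
Qed.

(* The x-coefficient of the remainder: H_4 times the x-coefficient
   2ab - a^3 of the remainder of x^4 modulo x^2 + a x + b. *)
Lemma reduction_at_1 :
  reduction 1 = H 4 * ((F 0 / F 2) * (F 1 / F 2) *+ 2 - (F 1 / F 2) ^+ 3).
Proof.
rewrite /reduction /= subrr (_ : 1 - 2 = -1) //.
by rewrite (@F_out (-1)) ?(@H_out 1) ?inE // mulr2n; field.
Qed.

(* In characteristic 2 that coefficient is -H_4 a^3, which is nonzero. *)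
Lemma reduction_1_neq0 :
  2%N \in [pchar K] -> reduction 1 != 0.
Proof.
move=> char2; have F1 : F 1 != 0 by rewrite -suppF !inE.
have H4 : H 4 != 0 by rewrite -suppH !inE.
rewrite reduction_at_1 -[_ *+ 2]mulr_natr (pcharf0 char2) mulr0 sub0r.
by rewrite mulrN oppr_eq0 mulf_neq0 // expf_neq0 // mulf_neq0 ?invr_eq0.
Qed.

End Reduction.

Theorem mainTheorem11 (I : Bpoly -> Prop) :
  tropical_ideal I ->
  (forall A, minimal_support I A <-> circuit4 A) ->
  ~ exists (K : fieldType) (J : (int -> K) -> Prop),
      (2%N \in [pchar K]) /\ Lideal J /\ (forall A, I A <-> tropJ J A).
Proof.
move=> _ circuits [K [J [char2 [LJ IJ]]]].
have [F [JF sF]] : exists F, J F /\ supp_is F [fset 0; 1; 2].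
  apply: minimal_support_realized LJ IJ _.
  by apply/circuits; right; exists 0, 1, 2.
have [H [JH sH]] : exists H, J H /\ supp_is H [fset 0; 4].
  apply: minimal_support_realized LJ IJ _.
  by apply/circuits; left; exists 0, 4.
have JP := reduction_in_ideal LJ JF JH.
have [A sA] := Lideal_supp LJ JP.
have IA : I A by apply/IJ; exact: tropJ_supp JP sA.
have A0 : A != fset0.
  by apply/fset0Pn; exists 1; rewrite sA reduction_1_neq0.
have A01 : A `<=` [fset 0; 1].
  apply/fsubsetP => u; rewrite sA; apply: contraR => u01.
  by rewrite (reduction_out sF sH u01) eqxx.
have [B [mB BA]] := minimal_support_below IA A0.
exact: no_circuit4_in_01 (fsubset_trans BA A01) (proj1 (circuits B) mB).
Qed.
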